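(* Let $\Theta$ be a finite-dimensional real inner product space, $\mathcal L:\Theta\to\mathbb R_+$ differentiable, $\theta_0\in\Theta$, $\varepsilon\in\mathbb R_+^*$, $R\in\mathbb R_+$, $c\in\mathbb R_+^*$. If for all $\theta\in\Theta$ with $\|\theta-\theta_0\|\le R$ it holds $\|\nabla\mathcal L(\theta)\|\ge(\mathcal L(\theta)-\varepsilon)_+/(\|\theta-\theta_0\|+c)$, then $(\mathcal L,\theta_0)$ satisfies the Convergence Criterion with limit error $\varepsilon_0=\tau\mathcal L(\theta_0)+(1-\tau)\varepsilon$, where $\tau=c/(R+c)\in(0,1]$, and with constant $\kappa=3c^{-2}(\mathcal L(\theta_0)-\varepsilon)_+^{-2}\in\mathbb R_+\cup\{+\infty\}$.
   Context: $(x)_+=\max\{0,x\}$. Convergence Criterion: $(\mathcal L,\theta_0)$ satisfies it with limit error $\varepsilon$ and constant $\kappa\in\mathbb R_+$ if every $\theta:\mathbb R_+\to\Theta$ with $\theta(0)=\theta_0$ and $\partial_t\theta=-\nabla\mathcal L(\theta)$ satisfies $\mathcal L(\theta_t)\le\varepsilon+(\kappa t+1/c)^{-1/3}$ for all $t>0$, where $c=\mathcal L(\theta_0)^3$. For $\kappa=+\infty$ (here arising when $\mathcal L(\theta_0)\le\varepsilon$), it means every such flow satisfies $\mathcal L(\theta_t)\le\varepsilon$ for all $t\ge0$. *)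

(* Theta = 'rV[R]_n with the Euclidean inner product. *)
From HB Require Import structures.
From mathcomp Require Import all_boot all_order all_algebra.
From mathcomp Require Import all_classical all_reals all_analysis.
Set Implicit Arguments. Unset Strict Implicit. Unset Printing Implicit Defensive.
Import Order.TTheory GRing.Theory Num.Theory.
Import numFieldNormedType.Exports.
Local Open Scope classical_set_scope.
Local Open Scope ring_scope.

Definition pospart {R : realType} (x : R) : R := Num.max 0 x.

Definition dotv {R : realType} {n : nat} (u v : 'rV[R]_n) : R :=
  \sum_(i < n) u ord0 i * v ord0 i.
Definition enorm {R : realType} {n : nat} (v : 'rV[R]_n) : R :=
  Num.sqrt (dotv v v).

Definition grad {R : realType} {n : nat} (L : 'rV[R]_n -> R) (th : 'rV[R]_n)
  : 'rV[R]_n := \row_(i < n) ('D_(delta_mx ord0 i) L th).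

Definition gradient_flow {R : realType} {n : nat} (L : 'rV[R]_n -> R)
  (th0 : 'rV[R]_n) (th : R -> 'rV[R]_n) : Prop :=
  th 0 = th0 /\
  (th t @[t --> 0^'+] --> th0) /\
  (forall t : R, 0 < t -> is_derive t 1 th (- grad L (th t))).

Definition conv_criterion {R : realType} {n : nat} (L : 'rV[R]_n -> R)
  (th0 : 'rV[R]_n) (eps : R) (kappa : \bar R) : Prop :=
  match kappa with
  | EFin k => 0 <= k /\
      forall th : R -> 'rV[R]_n, gradient_flow L th0 th ->
        forall t : R, 0 < t ->
          L (th t) <= eps + powR (k * t + (L th0 ^+ 3)^-1) (- (1 / 3))
  | +oo%E => forall th : R -> 'rV[R]_n, gradient_flow L th0 th ->
        forall t : R, 0 <= t -> L (th t) <= eps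
  | -oo%E => False
  end.

(* The energy (L(th) - eps) (|th - th0| + c) does not increase along the flow
   as long as th stays in the ball: its derivative is at most
   |grad L| ((L - eps) - |grad L| (|th - th0| + c)) <= 0 by the hypothesis
   (the distance is smoothed to sqrt(|th - th0|^2 + d^2) to be differentiable).
   Hence (L(th_t) - eps)(|th_t - th0| + c) <= (L(th0) - eps) c, so while
   L(th_t) - eps > tau (L(th0) - eps) one has |th_t - th0| < Rad, and a real
   induction shows that the flow never leaves the ball before time t. In the
   ball (L - eps)^2 <= |grad L| (L(th0) - eps) c, so that
   d/dt (L - eps)^-3 = 3 |grad L|^2 / (L - eps)^4 >= kappa, which integrates to
   the claimed bound. Once L(th_t) drops below the limit error it stays there,
   L being nonincreasing along the flow. *)

From HB Require Import structures.
From mathcomp Require Import all_boot all_order all_algebra.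
From mathcomp Require Import all_classical all_reals all_analysis.
From mathcomp Require Import ring lra.
Import Order.TTheory GRing.Theory Num.Theory.
Import numFieldNormedType.Exports.
Local Open Scope ring_scope.
Local Open Scope classical_set_scope.

Section Euclidean.
Context {R : realType} {n : nat}.
Implicit Types u v w : 'rV[R]_n.

Lemma dotvC u v : dotv u v = dotv v u.
Proof. by apply: eq_bigr => i _; rewrite mulrC. Qed.

Lemma dotv0l v : dotv 0 v = 0.
Proof. by apply: big1 => i _; rewrite mxE mul0r. Qed.

Lemma dotvNr u v : dotv u (- v) = - dotv u v.
Proof. by rewrite /dotv -sumrN; apply: eq_bigr => i _; rewrite mxE mulrN. Qed.

Lemma dotvvE u : dotv u u = \sum_(i < n) (u ord0 i) ^+ 2 :> R.
Proof. by apply: eq_bigr => i _; rewrite expr2. Qed.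

Lemma dotvv_ge0 u : 0 <= dotv u u.
Proof. by apply: sumr_ge0 => i _; rewrite -expr2 sqr_ge0. Qed.

Lemma dotvv_eq0 u : (dotv u u == 0) = (u == 0).
Proof.
apply/idP/eqP => [/eqP uu0|->]; last by rewrite dotv0l.
apply/rowP => i; rewrite mxE; apply/eqP; rewrite -[_ == 0]orbb -mulf_eq0.
by apply/eqP; move/psumr_eq0P : uu0; apply => // j _; rewrite -expr2 sqr_ge0.
Qed.

Lemma enorm_ge0 u : 0 <= enorm u.
Proof. exact: sqrtr_ge0. Qed.

Lemma enorm_sqr u : enorm u ^+ 2 = dotv u u.
Proof. by rewrite sqr_sqrtr ?dotvv_ge0. Qed.

Lemma enorm0 : enorm (0 : 'rV[R]_n) = 0.
Proof. by rewrite /enorm dotv0l sqrtr0. Qed.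

Lemma enormN u : enorm (- u) = enorm u.
Proof. by rewrite /enorm /dotv; under eq_bigr do rewrite !mxE mulrNN. Qed.

Lemma dotv_le_enormM u v : dotv u v <= enorm u * enorm v.
Proof.
have [->|u0] := eqVneq u 0; first by rewrite dotv0l enorm0 mul0r.
have [->|v0] := eqVneq v 0; first by rewrite dotvC dotv0l enorm0 mulr0.
have gt0 w : w != 0 -> 0 < enorm w by rewrite sqrtr_gt0 lt_def dotvv_eq0 dotvv_ge0 => ->.
set a := enorm u; set b := enorm v.
have expand : \sum_(i < n) (b * u ord0 i - a * v ord0 i) ^+ 2 =
    2 * a * b * (a * b - dotv u v).
  transitivity (b ^+ 2 * dotv u u - 2 * a * b * dotv u v + a ^+ 2 * dotv v v).
    rewrite /dotv !mulr_sumr -sumrB -big_split /=.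
    by apply: eq_bigr => i _; ring.
  by rewrite -!enorm_sqr -/a -/b; ring.
have : 0 <= 2 * a * b * (a * b - dotv u v).
  by rewrite -expand sumr_ge0 // => i _; rewrite sqr_ge0.
by rewrite pmulr_rge0 ?subr_ge0 // !mulr_gt0 ?gt0.
Qed.
End Euclidean.

Section CurveDerivatives.
Context {R : realType} {n : nat}.
Implicit Types (f : R -> 'rV[R]_n) (t : R) (v : 'rV[R]_n).

Lemma dotvv_continuous : continuous (fun u : 'rV[R]_n => dotv u u).
Proof.
move=> u; apply: differentiable_continuous.
rewrite (_ : (fun _ => _) = \sum_(i < n) (fun w : 'rV[R]_n => w ord0 i) ^+ 2).
  apply: differentiable_sum => i; rewrite expr2.
  by apply: differentiableM; apply: differentiable_coord.
by apply/funext => w; rewrite dotvvE fct_sumE.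
Qed.

Lemma enorm_continuous : continuous (@enorm R n).
Proof.
by move=> u; apply: continuous_comp (dotvv_continuous u) (@sqrt_continuous _ _).
Qed.

Lemma is_derive_coord {f t v} i :
  is_derive t 1 f v -> is_derive t 1 (fun s => f s ord0 i) (v ord0 i).
Proof.
move=> [df <-]; apply: DeriveDef; first exact: (derivable_mxP f t 1).1.
by rewrite derive_mx // mxE.
Qed.

Lemma is_derive_dotvv {f t v} :
  is_derive t 1 f v -> is_derive t 1 (fun s => dotv (f s) (f s)) (2 * dotv (f t) v).
Proof.
move=> df.
rewrite (_ : (fun _ => _) = \sum_(i < n) (fun s => f s ord0 i) ^+ 2); last first.
  by apply/funext => s; rewrite dotvvE fct_sumE.
rewrite /dotv mulr_sumr; apply: is_derive_sum => i.
rewrite mulrA -[f t ord0 i]expr1.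
exact/is_deriveX/is_derive_coord.
Qed.

Lemma is_derive_comp_grad (L : 'rV[R]_n -> R) f t v :
  differentiable L (f t) -> is_derive t 1 f v ->
  is_derive t 1 (L \o f) (dotv (grad L (f t)) v).
Proof.
move=> dL [df <-].
have df' : differentiable f t by apply/derivable1_diffP.
apply: DeriveDef; first by apply/derivable1_diffP/differentiable_comp.
rewrite deriveE; last exact: differentiable_comp.
rewrite diff_comp // /= -(deriveE _ df').
rewrite [X in 'd L (f t) X]row_sum_delta linear_sum /dotv.
by apply: eq_bigr => i _; rewrite linearZ /= -deriveE // /grad !mxE mulrC.
Qed.
End CurveDerivatives.

Section SmoothedNorm.
Context {R : realType} {n : nat}.
Variable d : R.
Hypothesis d_gt0 : 0 < d.
Implicit Types (u v : 'rV[R]_n).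

Definition smooth_enorm u : R := Num.sqrt (dotv u u + d ^+ 2).

Lemma smooth_enorm_arg_gt0 u : 0 < dotv u u + d ^+ 2.
Proof. by rewrite ltr_wpDl ?dotvv_ge0 ?exprn_gt0. Qed.

Lemma smooth_enorm_gt0 u : 0 < smooth_enorm u.
Proof. by rewrite sqrtr_gt0 smooth_enorm_arg_gt0. Qed.

Lemma enorm_le_smooth u : enorm u <= smooth_enorm u.
Proof. by rewrite ler_sqrt ?lerDl ?sqr_ge0 // addr_ge0 ?dotvv_ge0 ?sqr_ge0. Qed.

Lemma smooth_enorm0 : smooth_enorm 0 = d.
Proof. by rewrite /smooth_enorm dotv0l add0r sqrtr_sqr gtr0_norm. Qed.

Lemma smooth_enorm_continuous : continuous smooth_enorm.
Proof.
move=> u; apply: (@continuous_comp _ _ _ (fun w => dotv w w + d ^+ 2) Num.sqrt).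
  exact: (continuousD (dotvv_continuous u) (@cst_continuous _ _ (d ^+ 2) u)).
exact: sqrt_continuous.
Qed.

Lemma is_derive_smooth_enorm {f : R -> 'rV[R]_n} {t : R} {v} :
  is_derive t 1 f v ->
  is_derive t 1 (smooth_enorm \o f) (dotv (f t) v / smooth_enorm (f t)).
Proof.
move=> df.
have dq : is_derive t 1 (fun s => dotv (f s) (f s) + d ^+ 2) (2 * dotv (f t) v).
  rewrite -[X in is_derive _ _ _ X]addr0.
  exact (is_deriveD (is_derive_dotvv df) (is_derive_cst (d ^+ 2) t 1)).
have -> : dotv (f t) v / smooth_enorm (f t) =
    (2 * smooth_enorm (f t))^-1 * (2 * dotv (f t) v).
  by field; rewrite gt_eqF ?smooth_enorm_gt0.
exact: (@is_derive1_comp _ Num.sqrt _ t _ _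
  (is_derive1_sqrt (smooth_enorm_arg_gt0 (f t))) dq).
Qed.

Lemma dotv_div_smooth_enorm_le u v : dotv u v / smooth_enorm u <= enorm v.
Proof.
rewrite ler_pdivrMr ?smooth_enorm_gt0 // mulrC.
apply: le_trans (dotv_le_enormM u v) _.
by rewrite ler_wpM2r ?enorm_ge0 ?enorm_le_smooth.
Qed.
End SmoothedNorm.

Section RealLine.
Context {R : realType}.

Lemma nonincreasing_of_derive_le0 (F F' : R -> R) (b : R) :
  F x @[x --> 0^'+] --> F 0 ->
  (forall s, 0 < s <= b -> is_derive s 1 F (F' s)) ->
  (forall s, 0 < s < b -> F' s <= 0) ->
  forall a, 0 <= a <= b -> F b <= F a.
Proof.
move=> F0 dF F'_le0 a /andP[a_ge0 ab].
have [b_le0|b_gt0] := leP b 0.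
  by have -> : a = b by apply/eqP; rewrite eq_le ab (le_trans b_le0 a_ge0).
have derF s : 0 < s <= b -> derivable F s 1 by move/dF; case.
apply: (@ler0_derive1_le_cc _ F 0 b) => //;
  rewrite ?in_itv /= ?a_ge0 ?ab ?lexx ?(ltW b_gt0) //.
- by move=> s; rewrite in_itv /= => /andP[s0 sb]; apply/derF; rewrite s0 ltW.
- move=> s; rewrite in_itv /= => /andP[s0 sb].
  rewrite derive1E; have [_ ->] : is_derive s 1 F (F' s) by apply: dF; rewrite s0 ltW.
  by apply: F'_le0; rewrite s0.
- apply/continuous_within_itvP => //; split => //.
  + move=> s; rewrite in_itv /= => /andP[s0 sb].
    by apply/differentiable_continuous/derivable1_diffP/derF; rewrite s0 ltW.
  + apply/cvg_at_left_filter/differentiable_continuous/derivable1_diffP/derF.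
    by rewrite b_gt0 lexx.
Qed.

Lemma real_induction (t : R) (P : R -> Prop) :
  (forall s, 0 <= s <= t -> (forall u, 0 <= u < s -> P u) ->
     P s /\ \forall u \near s^'+, P u) ->
  forall u, 0 <= u <= t -> P u.
Proof.
move=> step.
pose S := [set s | 0 <= s <= t /\ forall u, 0 <= u < s -> P u].
have [t_lt0 u /andP[u_ge0 u_le_t]|t_ge0] := ltP t 0.
  by have := le_trans u_ge0 u_le_t; rewrite leNgt t_lt0.
have S0 : S 0.
  split; first by rewrite lexx.
  by move=> u /andP[u_ge0 u_lt0]; have := le_lt_trans u_ge0 u_lt0; rewrite ltxx.
have supS : has_sup S by split; [exists 0 | exists t => s [/andP[]]].
set s1 := sup S.
have s1_ge0 : 0 <= s1 by exact: sup_upper_bound.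
have s1_le_t : s1 <= t by apply: ge_sup; [exists 0 | move=> s [/andP[]]].
have below u : 0 <= u < s1 -> P u.
  move=> /andP[u_ge0 u_lt_s1].
  have gap : 0 < s1 - u by rewrite subr_gt0.
  have [s [_ Ps] s_gt_u] := sup_adherent gap supS.
  by apply: Ps; rewrite u_ge0 /=; rewrite -/s1 in s_gt_u; lra.
have [Ps1 [e /= e_gt0 Pe]] : P s1 /\ \forall u \near s1^'+, P u.
  by apply: step; rewrite ?s1_ge0.
have s1_eq_t : s1 = t.
  apply/eqP; rewrite eq_le s1_le_t leNgt; apply/negP => s1_lt_t.
  set m := Num.min t (s1 + e / 2).
  have Sm : S m.
    split; first by rewrite le_min t_ge0 ge_min lexx /=; lra.
    move=> u /andP[u_ge0]; rewrite lt_min => /andP[_ u_lt].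
    have [u_lt_s1|s1_lt_u|->//] := ltgtP u s1; first by apply: below; rewrite u_ge0.
    by apply: Pe => //=; rewrite ltr0_norm ?subr_lt0 // opprB; lra.
  have := sup_upper_bound supS Sm.
  by rewrite -/s1 /m leNgt lt_min s1_lt_t ltrDl divr_gt0.
move=> u /andP[u_ge0 u_le_t]; have [u_lt_s1|s1_le_u] := ltP u s1.
  by apply: below; rewrite u_ge0.
by have -> : u = s1 by apply/eqP; rewrite eq_le s1_le_u s1_eq_t u_le_t.
Qed.

Lemma is_derive_inv_cube {a y : R} : a < y ->
  is_derive y 1 (fun z => ((z - a) ^+ 3)^-1) (- 3 / (y - a) ^+ 4).
Proof.
rewrite -subr_gt0 => y_gt.
have d_cube :
    is_derive y 1 (fun z => (z - a) ^+ 3) ((3%:R * (y - a) ^+ 2) *: (1 - 0)).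
  exact (is_deriveX 3 (is_deriveB (is_derive_id y 1) (is_derive_cst a y 1))).
have -> : - 3 / (y - a) ^+ 4 =
    - ((y - a) ^+ 3) ^- 2 *: ((3%:R * (y - a) ^+ 2) *: (1 - 0)).
  by rewrite /GRing.scale /=; field; rewrite gt_eqF.
exact: (@is_deriveV _ (fun z => (z - a) ^+ 3) y _ 1
  (expf_neq0 3 (lt0r_neq0 y_gt)) d_cube).
Qed.

Lemma decay_rate_le (c h0 h G : R) : 0 < c -> 0 < h0 -> 0 < h -> 0 <= G ->
  h ^+ 2 <= G * (h0 * c) -> 3 * c ^- 2 * h0 ^- 2 <= 3 * G ^+ 2 / h ^+ 4.
Proof.
move=> c_gt0 h0_gt0 h_gt0 G_ge0 sq.
have sq2 : h ^+ 4 <= (G * (h0 * c)) ^+ 2 by nra.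
rewrite ler_pdivlMr ?exprn_gt0 //.
apply: le_trans (ler_wpM2l _ sq2) _; first by rewrite !divr_ge0 ?exprn_ge0 ?ltW.
suff -> : 3 * c ^- 2 * h0 ^- 2 * (G * (h0 * c)) ^+ 2 = 3 * G ^+ 2 by [].
by field; rewrite !gt_eqF.
Qed.

Lemma powR_neg_third_ge {x a : R} :
  0 < x -> 0 < a -> a <= (x ^+ 3)^-1 -> x <= powR a (- (1 / 3)).
Proof.
move=> x_gt0 a_gt0 a_le.
have y_gt0 : 0 < powR a (- (1 / 3)) by apply: powR_gt0.
have y_cube : powR a (- (1 / 3)) ^+ 3 = a^-1.
  rewrite -powR_mulrn ?powR_ge0 // -powRrM.
  have -> : - (1 / 3) * 3%:R = - 1 :> R by field.
  by rewrite powR_inv1 // ltW.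
suff : x ^+ 3 <= powR a (- (1 / 3)) ^+ 3.
  by rewrite (ler_pXn2r (n := 3)) // ?nnegrE ?ltW.
by rewrite y_cube -[x ^+ 3]invrK lef_pV2 ?posrE ?invr_gt0 ?exprn_gt0.
Qed.
End RealLine.

Section GradientFlow.
Context {R : realType} {n : nat}.
Context {L : 'rV[R]_n -> R} {th0 : 'rV[R]_n} {th : R -> 'rV[R]_n}.
Hypothesis L_diff : forall x, differentiable L x.
Hypothesis flow : gradient_flow L th0 th.

Lemma L_continuous : continuous L.
Proof. by move=> x; apply: differentiable_continuous. Qed.

Lemma flow_start : th 0 = th0.
Proof. by case: flow. Qed.

Lemma is_derive_flow {t : R} : 0 < t -> is_derive t 1 th (- grad L (th t)).
Proof. by case: flow => _ [_]; apply. Qed.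

Lemma flow_cvg_right {G : 'rV[R]_n -> R} {z : R} :
  0 <= z -> {for th z, continuous G} -> G (th s) @[s --> z^'+] --> G (th z).
Proof.
rewrite le_eqVlt => /predU1P[<-|z_gt0] cG.
  by case: flow => th_0 [th_cvg _]; apply: (continuous_cvg _ cG); rewrite th_0.
apply/cvg_at_right_filter/(continuous_cvg _ cG).
by have [/derivable1_diffP/differentiable_continuous] := is_derive_flow z_gt0.
Qed.

Lemma is_derive_flow_loss {t : R} :
  0 < t -> is_derive t 1 (L \o th) (- enorm (grad L (th t)) ^+ 2).
Proof.
move=> t_gt0; rewrite enorm_sqr -dotvNr.
exact: is_derive_comp_grad (L_diff _) (is_derive_flow t_gt0).
Qed.

Lemma flow_loss_nonincr {a b : R} : 0 <= a <= b -> L (th b) <= L (th a).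
Proof.
apply: (@nonincreasing_of_derive_le0 _ (L \o th)).
- exact: flow_cvg_right (lexx 0) (L_continuous _).
- by move=> s /andP[s_gt0 _]; apply: is_derive_flow_loss.
- by move=> s _; rewrite oppr_le0 sqr_ge0.
Qed.

Section Trapping.
Context {eps Rad c : R}.
Hypothesis c_gt0 : 0 < c.
Hypothesis grad_lb : forall x, enorm (x - th0) <= Rad ->
  pospart (L x - eps) / (enorm (x - th0) + c) <= enorm (grad L x).

Lemma grad_lb_mul {x} : enorm (x - th0) <= Rad -> eps < L x ->
  L x - eps <= enorm (grad L x) * (enorm (x - th0) + c).
Proof.
move=> x_ball; rewrite -subr_gt0 => Lx_gt.
have := @grad_lb x x_ball; rewrite /pospart (max_idPr (ltW Lx_gt)).
by rewrite ler_pdivrMr // ltr_wpDl ?enorm_ge0.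
Qed.

Lemma flow_energy_bound_smooth {d b : R} :
  0 < d -> 0 <= b -> eps < L (th b) ->
  (forall u, 0 < u < b -> enorm (th u - th0) <= Rad) ->
  (L (th b) - eps) * (smooth_enorm d (th b - th0) + c)
    <= (L th0 - eps) * (d + c).
Proof.
move=> d_gt0 b_ge0 Lb_gt ball.
pose energy x := (L x - eps) * (smooth_enorm d (x - th0) + c).
have -> : (L th0 - eps) * (d + c) = energy (th 0).
  by rewrite /energy flow_start subrr smooth_enorm0.
apply: (@nonincreasing_of_derive_le0 _ (energy \o th)
  (fun s => (L (th s) - eps) *
              (dotv (th s - th0) (- grad L (th s)) / smooth_enorm d (th s - th0))
            + (smooth_enorm d (th s - th0) + c) * (- enorm (grad L (th s)) ^+ 2)));
  last by rewrite lexx b_ge0.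
- apply: flow_cvg_right => //.
  exact (cvgM (cvgB (L_continuous _) (cvg_cst eps))
    (cvgD (continuous_comp (cvgB cvg_id (cvg_cst th0))
             (smooth_enorm_continuous d _))
      (cvg_cst c))).
- move=> s /andP[s_gt0 _].
  have dsub : is_derive s 1 (fun u => th u - th0) (- grad L (th s)).
    rewrite -[X in is_derive _ _ _ X]subr0.
    exact (is_deriveB (is_derive_flow s_gt0) (is_derive_cst th0 s 1)).
  have := is_deriveM (is_deriveB (is_derive_flow_loss s_gt0) (is_derive_cst eps s 1))
    (is_deriveD (is_derive_smooth_enorm _ d_gt0 dsub) (is_derive_cst c s 1)).
  by rewrite subr0 addr0.
- move=> s /andP[s_gt0 s_lt_b].
  set x := th s - th0; set G := enorm (grad L (th s)); set h := L (th s) - eps.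
  have h_gt0 : 0 < h.
    by rewrite subr_gt0 (lt_le_trans Lb_gt) // flow_loss_nonincr // !ltW.
  have slope_le : dotv x (- grad L (th s)) / smooth_enorm d x <= G.
    by rewrite /G -enormN; apply: dotv_div_smooth_enorm_le.
  have h_le : h <= G * (enorm x + c).
    by apply: grad_lb_mul; [apply: ball; rewrite s_gt0 | rewrite -subr_gt0].
  have r_le := enorm_le_smooth d x.
  have G_ge0 : 0 <= G := enorm_ge0 _.
  nra.
Qed.

Lemma flow_energy_bound {b : R} : 0 <= b -> eps < L (th b) ->
  (forall u, 0 < u < b -> enorm (th u - th0) <= Rad) ->
  (L (th b) - eps) * (enorm (th b - th0) + c) <= (L th0 - eps) * c.
Proof.
move=> b_ge0 Lb_gt ball.
have h0_gt0 : 0 < L th0 - eps.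
  by rewrite subr_gt0 (lt_le_trans Lb_gt) // -flow_start flow_loss_nonincr ?lexx.
(* let the smoothing parameter [e / (L th0 - eps)] go to 0 *)
apply/ler_addgt0Pr => e e_gt0.
have d_gt0 : 0 < e / (L th0 - eps) by rewrite divr_gt0.
have -> : (L th0 - eps) * c + e = (L th0 - eps) * (e / (L th0 - eps) + c).
  by rewrite mulrDr mulrCA divff ?gt_eqF // mulr1 addrC.
apply: le_trans _ (flow_energy_bound_smooth d_gt0 b_ge0 Lb_gt ball).
by rewrite ler_pM2l ?subr_gt0 // lerD2r enorm_le_smooth.
Qed.

Lemma flow_loss_decay {t : R} : 0 < t -> eps < L (th t) ->
  (forall u, 0 < u < t -> enorm (th u - th0) <= Rad) ->
  3 * c ^- 2 * (L th0 - eps) ^- 2 * t + ((L th0 - eps) ^+ 3)^-1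
    <= ((L (th t) - eps) ^+ 3)^-1.
Proof.
move=> t_gt0 Lt_gt ball.
set h0 := L th0 - eps; set k := 3 * c ^- 2 * h0 ^- 2.
have L_gt s : 0 <= s <= t -> eps < L (th s).
  by move=> s_in; rewrite (lt_le_trans Lt_gt) // flow_loss_nonincr.
pose inv_cube (y : R) := ((y - eps) ^+ 3)^-1.
suff : k * t - inv_cube (L (th t)) <= k * 0 - inv_cube (L (th 0)).
  by rewrite flow_start mulr0 sub0r /inv_cube -/h0; lra.
apply: (@nonincreasing_of_derive_le0 _ (fun s => k * s - inv_cube (L (th s)))
  (fun s => k - 3 * enorm (grad L (th s)) ^+ 2 / (L (th s) - eps) ^+ 4));
  last by rewrite lexx ltW.
- have L0_gt : eps < L (th 0) by apply: L_gt; rewrite lexx ltW.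
  have [d_inv_cube _] := is_derive_inv_cube L0_gt.
  have inv_cube_cont : {for L (th 0), continuous inv_cube}.
    exact/differentiable_continuous/derivable1_diffP.
  exact (cvgB (cvg_at_right_filter (@mulrl_continuous _ k 0))
    (flow_cvg_right (lexx 0) (continuous_comp (L_continuous _) inv_cube_cont))).
- move=> s /andP[s_gt0 s_le_t].
  have Ls_gt : eps < L (th s) by apply: L_gt; rewrite s_le_t ltW.
  have -> : k - 3 * enorm (grad L (th s)) ^+ 2 / (L (th s) - eps) ^+ 4 =
      k *: 1 - -3 / (L (th s) - eps) ^+ 4 * - enorm (grad L (th s)) ^+ 2.
    by rewrite [k *: 1]mulr1; ring.
  exact (is_deriveB (is_deriveZ k (is_derive_id s 1))
    (is_derive1_comp (is_derive_inv_cube Ls_gt) (is_derive_flow_loss s_gt0))).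
- move=> s /andP[s_gt0 s_lt_t].
  have s_in : 0 <= s <= t by rewrite !ltW.
  have h_gt0 : 0 < L (th s) - eps by rewrite subr_gt0 L_gt.
  have h_le : L (th s) - eps <= h0.
    by rewrite lerD2r -flow_start flow_loss_nonincr // lexx ltW.
  have s_ball : enorm (th s - th0) <= Rad by apply: ball; rewrite s_gt0.
  have ball_s u : 0 < u < s -> enorm (th u - th0) <= Rad.
    by case/andP=> u_gt0 u_lt_s; apply: ball; rewrite u_gt0 (lt_trans u_lt_s).
  have slope := grad_lb_mul s_ball (L_gt _ s_in).
  have energy := flow_energy_bound (ltW s_gt0) (L_gt _ s_in) ball_s.
  rewrite subr_le0; apply: decay_rate_le => //; first exact: lt_le_trans h_gt0 h_le.
    exact: enorm_ge0.
  rewrite expr2; apply: le_trans (ler_wpM2l (ltW h_gt0) slope) _.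
  by rewrite mulrCA ler_wpM2l ?enorm_ge0.
Qed.

Hypothesis Rad_ge0 : 0 <= Rad.

Lemma flow_stays_in_ball {t : R} :
  c / (Rad + c) * (L th0 - eps) < L (th t) - eps ->
  forall u, 0 <= u <= t -> enorm (th u - th0) < Rad.
Proof.
move=> Lt_gt; apply: real_induction => s /andP[s_ge0 s_le_t] ball.
set tau := c / (Rad + c); set h0 := L th0 - eps; set h := L (th s) - eps.
have tau_gt0 : 0 < tau by rewrite divr_gt0 ?ltr_wpDl.
have tau_le1 : tau <= 1 by rewrite ler_pdivrMr ?ltr_wpDl // mul1r lerDr.
have tauE : tau * (Rad + c) = c by rewrite divfK // gt_eqF ?ltr_wpDl.
have h_le : h <= h0 by rewrite /h /h0 lerD2r -flow_start flow_loss_nonincr // lexx s_ge0.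
have h_gt : tau * h0 < h.
  by rewrite (lt_le_trans Lt_gt) // /h lerD2r flow_loss_nonincr // s_ge0.
have h_gt0 : 0 < h by nra.
have ball_le u : 0 < u < s -> enorm (th u - th0) <= Rad.
  by move=> /andP[u_gt0 u_lt_s]; apply/ltW/ball; rewrite ltW.
have Ls_gt : eps < L (th s) by rewrite -subr_gt0.
have energy := flow_energy_bound s_ge0 Ls_gt ball_le; rewrite -/h -/h0 in energy.
have r_ge0 := enorm_ge0 (th s - th0).
have r_lt : enorm (th s - th0) < Rad.
  (* h (r + c) <= h0 c = tau h0 (Rad + c) < h (Rad + c) *)
  have : (h - tau * h0) * (Rad + c) > 0 by rewrite mulr_gt0 ?subr_gt0 // ltr_wpDl.
  nra.
split=> //.
have r_cont : {for th s, continuous (fun x : 'rV[R]_n => enorm (x - th0))}.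
  exact (continuous_comp (cvgB cvg_id (cvg_cst th0)) (enorm_continuous _)).
exact (cvgr_lt _ (flow_cvg_right s_ge0 r_cont) _ r_lt).
Qed.

Lemma flow_loss_bound {t : R} : 0 < eps -> 0 < L th0 - eps -> 0 < t ->
  L (th t) <= c / (Rad + c) * L th0 + (1 - c / (Rad + c)) * eps
    + powR (3 * c ^- 2 * (L th0 - eps) ^- 2 * t + (L th0 ^+ 3)^-1) (- (1 / 3)).
Proof.
move=> eps_gt0 h0_gt0 t_gt0; set tau := c / (Rad + c).
have [Lt_le|Lt_gt] := leP (L (th t)) (tau * L th0 + (1 - tau) * eps).
  by apply: le_trans Lt_le _; rewrite lerDl powR_ge0.
have tau_lt : tau * (L th0 - eps) < L (th t) - eps by lra.
have tau_gt0 : 0 < tau by rewrite divr_gt0 ?ltr_wpDl.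
have Lt_gt_eps : eps < L (th t) by rewrite -subr_gt0; nra.
have in_ball u : 0 < u < t -> enorm (th u - th0) <= Rad.
  move=> /andP[u_gt0 u_lt_t]; apply/ltW.
  by apply: (flow_stays_in_ball tau_lt); rewrite !ltW.
have decay := flow_loss_decay t_gt0 Lt_gt_eps in_ball.
have L0_gt0 : 0 < L th0 by lra.
have cube_le : (L th0 ^+ 3)^-1 <= ((L th0 - eps) ^+ 3)^-1.
  rewrite lef_pV2 ?posrE ?exprn_gt0 // (ler_pXn2r (n := 3)) // ?nnegrE ?ltW //; lra.
have rate_gt0 : 0 < 3 * c ^- 2 * (L th0 - eps) ^- 2 * t + (L th0 ^+ 3)^-1.
  apply: ltr_wpDl; last by rewrite invr_gt0 exprn_gt0.
  by rewrite mulr_ge0 ?divr_ge0 ?exprn_ge0 ?ltW.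
have ht_gt0 : 0 < L (th t) - eps by rewrite subr_gt0.
have := powR_neg_third_ge ht_gt0 rate_gt0
  (le_trans (lerD (lexx _) cube_le) decay).
nra.
Qed.
End Trapping.
End GradientFlow.

Theorem lemma1 (R : realType) (n : nat) (L : 'rV[R]_n -> R) (th0 : 'rV[R]_n)
  (eps Rad c : R) :
  (forall th, 0 <= L th) ->
  (forall th, differentiable L th) ->
  0 < eps -> 0 <= Rad -> 0 < c ->
  (forall th, enorm (th - th0) <= Rad ->
     pospart (L th - eps) / (enorm (th - th0) + c) <= enorm (grad L th)) ->
  let tau := c / (Rad + c) in
  conv_criterion L th0 (tau * L th0 + (1 - tau) * eps)
    (if pospart (L th0 - eps) == 0 then +oo%E
     else (3 * c ^- 2 * (pospart (L th0 - eps)) ^- 2)%:E).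
Proof.
move=> _ L_diff eps_gt0 Rad_ge0 c_gt0 grad_lb tau.
rewrite /conv_criterion /pospart.
have [h0_le0|h0_gt0] := leP (L th0 - eps) 0.
  rewrite eqxx => th flow t t_ge0.
  have tau_le1 : tau <= 1 by rewrite ler_pdivrMr ?ltr_wpDl // mul1r lerDr.
  have Lt_le : L (th t) <= L th0.
    by rewrite -(flow_start flow) (flow_loss_nonincr L_diff flow) // lexx.
  nra.
rewrite gt_eqF //; split=> [|th flow t t_gt0].
  by rewrite !mulr_ge0 ?invr_ge0 ?exprn_ge0 ?ltW.
exact: (flow_loss_bound L_diff flow c_gt0 grad_lb Rad_ge0).
Qed.
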